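(* On the two coordinate axes consider the inner product $$\langle f,g\rangle=\int_{\mathbb R}f(x,0)g(x,0)e^{-x^2}dx+\int_{\mathbb R}f(0,y)g(0,y)e^{-y^2}dy .$$ Define $$Y_{n,1}(x,y)=H_n(x)+H_n(y)-H_n(0)\ (n\ge0),$$ $$Y_{2n,2}(x,y)=x^2L_{n-1}^{\frac32}(x^2)-y^2L_{n-1}^{\frac32}(y^2)\ (n\ge1),\qquad Y_{2n+1,2}(x,y)=x\,L_n^{\frac12}(x^2)-y\,L_n^{\frac12}(y^2)\ (n\ge0).$$ Then for every $m\ge1$, $Y_{m,1}$ and $Y_{m,2}$ are polynomials of degree $m$ which are orthogonal (with respect to $\langle\cdot,\cdot\rangle$) to all polynomials of degree less than $m$ and to each other; that is, they are mutually orthogonal elements of $\mathcal H_m$.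
   Context: $H_n$ denotes the Hermite polynomial of degree $n$ (orthogonal with respect to $e^{-x^2}$ on $\mathbb R$), and $L_n^{\alpha}$ the Laguerre polynomial of degree $n$ (orthogonal with respect to $t^{\alpha}e^{-t}$ on $[0,\infty)$). $\mathcal H_m$ is the space of polynomials of degree $m$ in two variables orthogonal to all polynomials of lower degree, modulo the ideal $\langle xy\rangle$. *)

From Stdlib Require Import Reals Lra Lia.
Open Scope R_scope.

(* Physicists' Hermite polynomials (orthogonal w.r.t. exp(-x^2)):
   H_0 = 1, H_1 = 2x, H_{n+1} = 2x H_n - 2n H_{n-1}.
   hermite_pair n x = (H_n x, H_{n+1} x). *)
Fixpoint hermite_pair (n : nat) (x : R) : R * R :=
  match n with
  | O => (1, 2 * x)
  | S k => let (h0, h1) := hermite_pair k x in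
           (h1, 2 * x * h1 - 2 * INR (S k) * h0)
  end.
Definition hermite (n : nat) (x : R) : R := fst (hermite_pair n x).

(* Generalized Laguerre polynomials L_n^a (orthogonal w.r.t. t^a e^{-t}):
   L_0 = 1, L_1 = 1 + a - t,
   (n+1) L_{n+1} = (2n+1+a-t) L_n - (n+a) L_{n-1}. *)
Fixpoint laguerre_pair (a : R) (n : nat) (t : R) : R * R :=
  match n with
  | O => (1, 1 + a - t)
  | S k => let (l0, l1) := laguerre_pair a k t in
           (l1, ((2 * INR (S k) + 1 + a - t) * l1 - (INR (S k) + a) * l0)
                / INR (S (S k)))
  end.
Definition laguerre (a : R) (n : nat) (t : R) : R := fst (laguerre_pair a n t).

Definition Y1 (n : nat) (x y : R) : R := hermite n x + hermite n y - hermite n 0.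

(* Y_{2n,2}(x,y) = x^2 L_{n-1}^{3/2}(x^2) - y^2 L_{n-1}^{3/2}(y^2)   (n >= 1),
   Y_{2n+1,2}(x,y) = x L_n^{1/2}(x^2) - y L_n^{1/2}(y^2)              (n >= 0).
   (Only used for m >= 1.) *)
Definition Y2 (m : nat) (x y : R) : R :=
  if Nat.even m then
    x ^ 2 * laguerre (3 / 2) (Nat.div2 m - 1) (x ^ 2)
    - y ^ 2 * laguerre (3 / 2) (Nat.div2 m - 1) (y ^ 2)
  else
    x * laguerre (1 / 2) (Nat.div2 m) (x ^ 2)
    - y * laguerre (1 / 2) (Nat.div2 m) (y ^ 2).

Definition poly2_eval (c : nat -> nat -> R) (N : nat) (x y : R) : R :=
  sum_f_R0 (fun i => sum_f_R0 (fun j => c i j * x ^ i * y ^ j) N) N.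

Definition poly2_deg_le (f : R -> R -> R) (d : nat) : Prop :=
  exists c : nat -> nat -> R,
    (forall i j, (d < i + j)%nat -> c i j = 0) /\
    (forall x y, f x y = poly2_eval c d x y).

Definition poly2_deg (f : R -> R -> R) (d : nat) : Prop :=
  exists c : nat -> nat -> R,
    (forall i j, (d < i + j)%nat -> c i j = 0) /\
    (exists i j, (i + j = d)%nat /\ c i j <> 0) /\
    (forall x y, f x y = poly2_eval c d x y).

Definition improper_integral_R (h : R -> R) (l : R) : Prop :=
  (forall a b : R, a <= b -> exists _ : Riemann_integrable h a b, True) /\
  (forall eps : R, eps > 0 -> exists M : R, forall (a b : R)
     (pr : Riemann_integrable h a b),
     a <= - M -> M <= b -> Rabs (RiemannInt pr - l) < eps).

Definition axes_inner (f g : R -> R -> R) (v : R) : Prop :=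
  exists l1 l2 : R,
    improper_integral_R (fun x => f x 0 * g x 0 * exp (- x ^ 2)) l1 /\
    improper_integral_R (fun y => f 0 y * g 0 y * exp (- y ^ 2)) l2 /\
    l1 + l2 = v.

Definition axes_orth (f g : R -> R -> R) : Prop := axes_inner f g 0.

(* On the x-axis [Y1 m] restricts to [H_m] and [Y2 m] to an odd polynomial [phi] of degree
   [m]; on the y-axis they restrict to [H_m] and [-phi]. Via the Laguerre-Hermite relation
   [x L_n^{1/2}(x^2) = H_{2n+1}(x) / (2 (-4)^n n!)] and the contiguous relation for
   [L^{3/2}], [phi] is a multiple of [H_m] for odd [m], and [x phi] is a combination of
   [H_{m-1}] and [H_{m+1}] for even [m]; hence both restrictions are orthogonal to
   [x, ..., x^{m-1}] for the weight [e^{-x^2}] (integrate by parts against [x^k]).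
   A polynomial [g] of degree [< m] restricts to both axes with the same constant term, whose
   two contributions cancel: for [Y1 m] because [int H_m e^{-x^2} = 0], for [Y2 m] because
   of the sign flip. The same sign flip gives [<Y1 m, Y2 m> = 0]. All integrals converge
   since a polynomial times [e^{-x^2}] is dominated by [C / (1 + x^2)]. *)

From Stdlib Require Import Reals Lra Lia Classical.
From Coquelicot Require Import Coquelicot.
Open Scope R_scope.

Definition is_RInt_line (h : R -> R) (l : R) : Prop :=
  (forall x, continuous h x) /\
  (forall eps, 0 < eps -> exists M, forall a b, a <= - M -> M <= b ->
      Rabs (RInt h a b - l) < eps).

Lemma ex_RInt_continuous_R (h : R -> R) a b :
  (forall x, continuous h x) -> ex_RInt h a b.
Proof.
  intros Hc; apply (ex_RInt_continuous (V := R_CompleteNormedModule)); auto.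
Qed.

Lemma improper_integral_R_of_line h l : is_RInt_line h l -> improper_integral_R h l.
Proof.
  intros [Hc Hl]; split.
  - intros a b _; exists (ex_RInt_Reals_0 _ _ _ (ex_RInt_continuous_R h a b Hc)); exact I.
  - intros eps Heps; destruct (Hl eps Heps) as [M HM]; exists M.
    intros a b pr Ha Hb; rewrite <- RInt_Reals; auto.
Qed.

Lemma is_RInt_line_ext h k l :
  (forall x, h x = k x) -> is_RInt_line h l -> is_RInt_line k l.
Proof.
  intros E [Hc Hl]; split.
  - intros x; apply (continuous_ext h); auto.
  - intros eps Heps; destruct (Hl eps Heps) as [M HM]; exists M; intros a b Ha Hb.
    rewrite <- (RInt_ext h) by auto; auto.
Qed.

Lemma is_RInt_line_eq h l l' : l = l' -> is_RInt_line h l -> is_RInt_line h l'.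
Proof. now intros <-. Qed.

Lemma is_RInt_line_plus h k lh lk :
  is_RInt_line h lh -> is_RInt_line k lk ->
  is_RInt_line (fun x => h x + k x) (lh + lk).
Proof.
  intros [Hc Hl] [Kc Kl]; split.
  - intros x; apply (continuous_plus h k); auto.
  - intros eps Heps.
    destruct (Hl (eps / 2)) as [M1 H1]; [lra|].
    destruct (Kl (eps / 2)) as [M2 H2]; [lra|].
    exists (Rmax M1 M2); intros a b Ha Hb.
    pose proof (Rmax_l M1 M2); pose proof (Rmax_r M1 M2).
    replace (RInt (fun x => h x + k x) a b) with (RInt h a b + RInt k a b)
      by (symmetry; apply (RInt_plus h k); apply ex_RInt_continuous_R; auto).
    specialize (H1 a b ltac:(lra) ltac:(lra)); specialize (H2 a b ltac:(lra) ltac:(lra)).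
    apply Rabs_def2 in H1 as [? ?]; apply Rabs_def2 in H2 as [? ?]; apply Rabs_def1; lra.
Qed.

Lemma is_RInt_line_scal c h l :
  is_RInt_line h l -> is_RInt_line (fun x => c * h x) (c * l).
Proof.
  intros [Hc Hl]; split.
  - intros x; apply (continuous_mult (fun _ => c) h); auto; apply continuous_const.
  - intros eps Heps.
    assert (Hc1 : 0 < Rabs c + 1) by (pose proof (Rabs_pos c); lra).
    destruct (Hl (eps / (Rabs c + 1))) as [M HM]; [apply Rdiv_lt_0_compat; lra|].
    exists M; intros a b Ha Hb.
    replace (RInt (fun x => c * h x) a b) with (c * RInt h a b)
      by (symmetry; apply (RInt_scal h); apply ex_RInt_continuous_R; auto).
    replace (c * RInt h a b - c * l) with (c * (RInt h a b - l)) by ring.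
    rewrite Rabs_mult.
    specialize (HM a b Ha Hb); pose proof (Rabs_pos c); pose proof (Rabs_pos (RInt h a b - l)).
    apply Rle_lt_trans with ((Rabs c + 1) * Rabs (RInt h a b - l)); [nra|].
    apply (Rmult_lt_compat_l (Rabs c + 1)) in HM; auto.
    replace ((Rabs c + 1) * (eps / (Rabs c + 1))) with eps in HM by (field; lra); exact HM.
Qed.

Lemma is_RInt_line_poly_sum phi L (c : nat -> R) N :
  is_RInt_line phi L ->
  (forall i, (1 <= i <= N)%nat -> is_RInt_line (fun x => x ^ i * phi x) 0) ->
  is_RInt_line (fun x => sum_f_R0 (fun i => c i * x ^ i) N * phi x) (c 0%nat * L).
Proof.
  intros H0 H; induction N.
  - apply (is_RInt_line_ext (fun x => c 0%nat * phi x)); [intros; simpl; ring|].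
    now apply is_RInt_line_scal.
  - apply (is_RInt_line_eq _ (c 0%nat * L + c (S N) * 0)); [ring|].
    apply (is_RInt_line_ext (fun x => sum_f_R0 (fun i => c i * x ^ i) N * phi x
                                      + c (S N) * (x ^ S N * phi x))); [intros; simpl; ring|].
    apply is_RInt_line_plus; [apply IHN; intros; apply H; lia|].
    apply is_RInt_line_scal, H; lia.
Qed.

Lemma nondecreasing_bounded_cvg (F : R -> R) B :
  (forall x y, 0 <= x <= y -> F x <= F y) -> (forall x, 0 <= x -> F x <= B) ->
  exists L, forall eps, 0 < eps ->
    exists M, 0 <= M /\ forall x, M <= x -> Rabs (F x - L) < eps.
Proof.
  intros Hmono Hbnd.
  set (E := fun y => exists x, 0 <= x /\ y = F x).
  destruct (completeness E) as [L [HLub HLleast]].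
  { exists B; intros y [x [Hx ->]]; auto. }
  { exists (F 0), 0; split; [lra|auto]. }
  exists L; intros eps Heps.
  destruct (classic (exists x, 0 <= x /\ L - eps < F x)) as [[x0 [Hx0 Hclose]]|Hfar].
  - exists x0; split; auto; intros x Hx.
    assert (F x0 <= F x) by (apply Hmono; lra).
    assert (F x <= L) by (apply HLub; exists x; split; [lra|auto]).
    apply Rabs_def1; lra.
  - exfalso; enough (L <= L - eps) by lra.
    apply HLleast; intros y [x [Hx ->]].
    apply Rnot_lt_le; intros Hlt; apply Hfar; exists x; auto.
Qed.

Lemma is_RInt_atan D a b :
  is_RInt (fun x => D / (1 + x ^ 2)) a b (D * atan b - D * atan a).
Proof.
  apply (is_RInt_derive (V := R_CompleteNormedModule) (fun x => D * atan x)).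
  - intros x _; unfold Rdiv.
    apply (is_derive_scal (fun x => atan x)), is_derive_Reals, derivable_pt_lim_atan.
  - intros x _; apply (ex_derive_continuous (K := R_AbsRing) (V := R_NormedModule)).
    auto_derive; pose proof (pow2_ge_0 x); lra.
Qed.

Lemma ex_is_RInt_line_nonneg (h : R -> R) D :
  (forall x, continuous h x) -> (forall x, 0 <= h x <= D / (1 + x ^ 2)) ->
  exists l, is_RInt_line h l.
Proof.
  intros Hc Hh.
  assert (Hint : forall x y, ex_RInt h x y) by (intros; apply ex_RInt_continuous_R; auto).
  assert (Hpos : forall x y, x <= y -> 0 <= RInt h x y)
    by (intros; apply RInt_ge_0; auto; intros; apply Hh).
  assert (Chasles : forall x y z, RInt h x y + RInt h y z = RInt h x z)
    by (intros; apply (RInt_Chasles (V := R_CompleteNormedModule)); auto).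
  assert (Hbnd : forall x y, x <= y -> RInt h x y <= D * PI).
  { intros x y Hxy.
    assert (HD : 0 <= D) by (destruct (Hh 0) as [H0 H1]; simpl in H1; lra).
    apply Rle_trans with (D * atan y - D * atan x).
    - rewrite <- (is_RInt_unique _ _ _ _ (is_RInt_atan D x y)).
      apply RInt_le; auto; [eexists; apply is_RInt_atan|intros; apply Hh].
    -       pose proof (atan_bound x); pose proof (atan_bound y).
      replace (D * atan y - D * atan x) with (D * (atan y - atan x)) by ring.
      apply Rmult_le_compat_l; lra. }
  destruct (nondecreasing_bounded_cvg (fun b => RInt h 0 b) (D * PI)) as [L1 HL1].
  { intros x y Hxy; rewrite <- (Chasles 0 x y); pose proof (Hpos x y ltac:(lra)); lra. }
  { intros x Hx; apply Hbnd; lra. }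
  destruct (nondecreasing_bounded_cvg (fun a => RInt h (- a) 0) (D * PI)) as [L2 HL2].
  { intros x y Hxy; rewrite <- (Chasles (- y) (- x) 0); pose proof (Hpos (- y) (- x) ltac:(lra)); lra. }
  { intros x Hx; apply Hbnd; lra. }
  exists (L2 + L1); split; auto.
  intros eps Heps.
  destruct (HL1 (eps / 2)) as [M1 [HM1 H1]]; [lra|].
  destruct (HL2 (eps / 2)) as [M2 [HM2 H2]]; [lra|].
  exists (Rmax M1 M2); intros a b Ha Hb.
  pose proof (Rmax_l M1 M2); pose proof (Rmax_r M1 M2).
  rewrite <- (Chasles a 0 b).
  specialize (H1 b ltac:(lra)); specialize (H2 (- a) ltac:(lra)).
  rewrite Ropp_involutive in H2.
  apply Rabs_def2 in H1 as [? ?]; apply Rabs_def2 in H2 as [? ?]; apply Rabs_def1; lra.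
Qed.

Lemma ex_is_RInt_line_dominated (h : R -> R) D :
  (forall x, continuous h x) -> (forall x, Rabs (h x) <= D / (1 + x ^ 2)) ->
  exists l, is_RInt_line h l.
Proof.
  intros Hc Hh.
  assert (Habs : forall x, continuous (fun y => Rabs (h y)) x)
    by (intros; apply continuous_Rabs_comp; auto).
  (* [h] is the difference of its positive and negative parts, both dominated. *)
  destruct (ex_is_RInt_line_nonneg (fun x => (Rabs (h x) + h x) / 2) D) as [l1 H1].
  { intros x; apply (continuous_mult (fun y => Rabs (h y) + h y) (fun _ => / 2)).
    - apply (continuous_plus (fun y => Rabs (h y)) h); auto.
    - apply continuous_const. }
  { intros x; specialize (Hh x); pose proof (Rle_abs (h x)); pose proof (Rabs_maj2 (h x)).
    split; lra. }
  destruct (ex_is_RInt_line_nonneg (fun x => (Rabs (h x) - h x) / 2) D) as [l2 H2].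
  { intros x; apply (continuous_mult (fun y => Rabs (h y) - h y) (fun _ => / 2)).
    - apply (continuous_minus (fun y => Rabs (h y)) h); auto.
    - apply continuous_const. }
  { intros x; specialize (Hh x); pose proof (Rle_abs (h x)); pose proof (Rabs_maj2 (h x)).
    split; lra. }
  exists (l1 + (-1) * l2).
  apply (is_RInt_line_ext (fun x => (Rabs (h x) + h x) / 2 + (-1) * ((Rabs (h x) - h x) / 2)));
    [intros; field|].
  now apply is_RInt_line_plus, is_RInt_line_scal.
Qed.

Inductive poly_fun : (R -> R) -> Prop :=
  | poly_fun_const c : poly_fun (fun _ => c)
  | poly_fun_id : poly_fun (fun x => x)
  | poly_fun_plus f g : poly_fun f -> poly_fun g -> poly_fun (fun x => f x + g x)
  | poly_fun_mult f g : poly_fun f -> poly_fun g -> poly_fun (fun x => f x * g x)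
  | poly_fun_ext f g : poly_fun f -> (forall x, f x = g x) -> poly_fun g.

Lemma poly_fun_scal c f : poly_fun f -> poly_fun (fun x => c * f x).
Proof. now apply (poly_fun_mult (fun _ => c)), poly_fun_const. Qed.

Lemma poly_fun_pow n : poly_fun (fun x => x ^ n).
Proof.
  induction n as [|n IHn].
  - apply (poly_fun_ext (fun _ => 1)); [apply poly_fun_const|reflexivity].
  - apply (poly_fun_mult (fun x => x)); [apply poly_fun_id|exact IHn].
Qed.

Lemma poly_fun_coef (a : nat -> R) d : poly_fun (fun x => sum_f_R0 (fun i => a i * x ^ i) d).
Proof.
  induction d as [|d IHd].
  - apply poly_fun_scal, poly_fun_pow.
  - apply (poly_fun_plus (fun x => sum_f_R0 (fun i => a i * x ^ i) d)); auto.
    apply poly_fun_scal, poly_fun_pow.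
Qed.

Lemma poly_fun_ex_derive f : poly_fun f -> forall x, ex_derive f x.
Proof.
  induction 1; intros x.
  - apply ex_derive_const.
  - apply ex_derive_id.
  - apply (ex_derive_plus f g); auto.
  - apply (ex_derive_mult f g); auto.
  - apply (ex_derive_ext f); auto.
Qed.

Lemma poly_fun_gauss_continuous f : poly_fun f ->
  forall x, continuous (fun y => f y * exp (- y ^ 2)) x.
Proof.
  intros Hf x; apply (ex_derive_continuous (K := R_AbsRing) (V := R_NormedModule)).
  apply (ex_derive_mult f (fun y => exp (- y ^ 2))); [apply poly_fun_ex_derive; auto|].
  auto_derive; auto.
Qed.

Lemma poly_fun_growth f : poly_fun f ->
  exists C K, 0 <= C /\ forall x, Rabs (f x) <= C * (1 + x ^ 2) ^ K.
Proof.
  induction 1 as [c| |f g _ [C1 [K1 [HC1 Hf]]] _ [C2 [K2 [HC2 Hg]]]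
                  |f g _ [C1 [K1 [HC1 Hf]]] _ [C2 [K2 [HC2 Hg]]]|f g _ [C [K [HC Hf]]] E].
  - exists (Rabs c), 0%nat; split; [apply Rabs_pos|intros; simpl; lra].
  - exists 1, 1%nat; split; [lra|intros x; simpl].
    assert (Rabs x * Rabs x = x * x) by (rewrite <- Rabs_mult; apply Rabs_pos_eq; nra).
    nra.
  - exists (C1 + C2), (K1 + K2)%nat; split; [lra|intros x].
    assert (H1 : 1 <= 1 + x ^ 2) by (pose proof (pow2_ge_0 x); lra).
    pose proof (Rle_pow _ K1 (K1 + K2) H1 ltac:(lia)).
    pose proof (Rle_pow _ K2 (K1 + K2) H1 ltac:(lia)).
    eapply Rle_trans; [apply Rabs_triang|].
    specialize (Hf x); specialize (Hg x); nra.
  - exists (C1 * C2), (K1 + K2)%nat; split; [nra|intros x].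
    rewrite Rabs_mult, pow_add.
    replace (C1 * C2 * ((1 + x ^ 2) ^ K1 * (1 + x ^ 2) ^ K2))
      with ((C1 * (1 + x ^ 2) ^ K1) * (C2 * (1 + x ^ 2) ^ K2)) by ring.
    apply Rmult_le_compat; auto using Rabs_pos.
  - exists C, K; split; auto; intros x; rewrite <- E; auto.
Qed.

Lemma exp_INR_mult n y : exp (INR n * y) = exp y ^ n.
Proof.
  induction n as [|n IHn]; [simpl; now rewrite Rmult_0_l, exp_0|].
  rewrite S_INR, Rmult_plus_distr_r, Rmult_1_l, exp_plus, IHn; simpl; ring.
Qed.

(* [1 + y <= n (1 + y / n) <= n exp (y / n)], raised to the power [n]. *)
Lemma pow_one_plus_sq_gauss_le n x : (1 <= n)%nat ->
  (1 + x ^ 2) ^ n * exp (- x ^ 2) <= INR n ^ n.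
Proof.
  intros Hn; assert (Hn' : 1 <= INR n) by (apply (le_INR 1); auto).
  set (y := x ^ 2); assert (Hy : 0 <= y) by apply pow2_ge_0.
  assert (Hexp : exp y = exp (y / INR n) ^ n).
  { rewrite <- exp_INR_mult; f_equal; field; lra. }
  assert (Hbase : 1 + y <= INR n * exp (y / INR n)).
  { apply Rle_trans with (INR n * (1 + y / INR n)).
    - replace (INR n * (1 + y / INR n)) with (INR n + y) by (field; lra); lra.
    - apply Rmult_le_compat_l; [lra|apply exp_ineq1_le]. }
  rewrite exp_Ropp; pose proof (exp_pos y).
  apply (Rmult_le_reg_r (exp y)); auto.
  rewrite Rmult_assoc, Rinv_l, Rmult_1_r by lra.
  rewrite Hexp, <- Rpow_mult_distr; apply pow_incr; lra.
Qed.

Lemma poly_fun_gauss_le f : poly_fun f ->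
  exists D, 0 <= D /\ forall x, Rabs (f x * exp (- x ^ 2)) <= D / (1 + x ^ 2).
Proof.
  intros Hf; destruct (poly_fun_growth f Hf) as [C [K [HC HK]]].
  exists (C * INR (S K) ^ S K); split; [apply Rmult_le_pos; auto; apply pow_le, pos_INR|].
  intros x; rewrite Rabs_mult, (Rabs_right (exp _)) by (left; apply exp_pos).
  assert (Hx : 0 < 1 + x ^ 2) by (pose proof (pow2_ge_0 x); lra).
  apply (Rmult_le_reg_r (1 + x ^ 2)); auto.
  replace (C * INR (S K) ^ S K / (1 + x ^ 2) * (1 + x ^ 2)) with (C * INR (S K) ^ S K)
    by (field; lra).
  pose proof (pow_one_plus_sq_gauss_le (S K) x ltac:(lia)); simpl in H.
  pose proof (exp_pos (- x ^ 2)); specialize (HK x).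
  apply Rle_trans with (C * (1 + x ^ 2) ^ K * exp (- x ^ 2) * (1 + x ^ 2)).
  - apply Rmult_le_compat_r; [lra|]; apply Rmult_le_compat_r; lra.
  - replace (C * (1 + x ^ 2) ^ K * exp (- x ^ 2) * (1 + x ^ 2))
      with (C * ((1 + x ^ 2) * (1 + x ^ 2) ^ K * exp (- x ^ 2))) by ring.
    apply Rmult_le_compat_l; auto.
Qed.

Lemma ex_is_RInt_line_poly_gauss f : poly_fun f ->
  exists l, is_RInt_line (fun x => f x * exp (- x ^ 2)) l.
Proof.
  intros Hf; destruct (poly_fun_gauss_le f Hf) as [D [_ HD]].
  apply (ex_is_RInt_line_dominated _ D); auto using poly_fun_gauss_continuous.
Qed.

Lemma poly_fun_gauss_small f : poly_fun f -> forall eps, 0 < eps ->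
  exists M, forall x, M <= Rabs x -> Rabs (f x * exp (- x ^ 2)) < eps.
Proof.
  intros Hf eps Heps; destruct (poly_fun_gauss_le f Hf) as [D [HD Hbnd]].
  assert (HDe : 0 <= D / eps) by (apply Rdiv_le_0_compat; lra).
  exists (D / eps + 1); intros x Hx.
  eapply Rle_lt_trans; [apply Hbnd|].
  assert (Hx2 : Rabs x <= x ^ 2) by (rewrite <- (pow2_abs x); simpl; nra).
  assert (Hx2' : 0 < 1 + x ^ 2) by (pose proof (pow2_ge_0 x); lra).
  apply (Rmult_lt_reg_r (1 + x ^ 2)); auto.
  unfold Rdiv; rewrite Rmult_assoc, Rinv_l, Rmult_1_r by lra.
  replace D with (eps * (D / eps)) by (field; lra); nra.
Qed.

(* [(Q e^{-x^2})' = (Q' - 2 x Q) e^{-x^2}] and [Q e^{-x^2}] vanishes at infinity. *)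
Lemma is_RInt_line_gauss_deriv Q dQ : poly_fun Q -> poly_fun dQ ->
  (forall x, is_derive Q x (dQ x)) ->
  is_RInt_line (fun x => (dQ x - 2 * x * Q x) * exp (- x ^ 2)) 0.
Proof.
  intros HQ HdQ HD.
  assert (Hpoly : poly_fun (fun x => dQ x - 2 * x * Q x)).
  { apply (poly_fun_ext (fun x => dQ x + (-2) * (x * Q x))); [|intros; ring].
    apply (poly_fun_plus dQ); auto.
    apply poly_fun_scal, (poly_fun_mult (fun x => x)); auto using poly_fun_id. }
  split; [apply poly_fun_gauss_continuous; auto|].
  intros eps Heps; destruct (poly_fun_gauss_small Q HQ (eps / 2)) as [M HM]; [lra|].
  exists (Rabs M); intros a b Ha Hb.
  replace (RInt _ a b) with (Q b * exp (- b ^ 2) - Q a * exp (- a ^ 2)).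
  - pose proof (Rle_abs M); pose proof (Rabs_pos M).
    assert (Hb' := HM b ltac:(rewrite Rabs_right; lra)).
    assert (Ha' := HM a ltac:(rewrite Rabs_left1; lra)).
    apply Rabs_def2 in Ha' as [? ?]; apply Rabs_def2 in Hb' as [? ?]; apply Rabs_def1; lra.
  - symmetry; apply is_RInt_unique.
    apply (is_RInt_derive (V := R_CompleteNormedModule) (fun x => Q x * exp (- x ^ 2))).
    + intros x _.
      assert (Hexp : is_derive (fun y => exp (- y ^ 2)) x (- (2 * x) * exp (- x ^ 2)))
        by (auto_derive; auto; simpl; ring).
      replace ((dQ x - 2 * x * Q x) * exp (- x ^ 2))
        with (dQ x * exp (- x ^ 2) + Q x * (- (2 * x) * exp (- x ^ 2))) by ring.
      exact (is_derive_mult Q _ x _ _ (HD x) Hexp Rmult_comm).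
    + intros x _; apply poly_fun_gauss_continuous; auto.
Qed.

Lemma nat_ind2 (P : nat -> Prop) :
  P 0%nat -> P 1%nat -> (forall n, P n -> P (S n) -> P (S (S n))) -> forall n, P n.
Proof.
  intros H0 H1 HS n; enough (P n /\ P (S n)) by tauto.
  induction n as [|n [IH0 IH1]]; auto.
Qed.

Lemma is_derive_Rext (f g : R -> R) (x l : R) :
  (forall y, f y = g y) -> is_derive f x l -> is_derive g x l.
Proof. exact (is_derive_ext f g x l). Qed.

Lemma is_derive_Rplus (f g : R -> R) (x df dg : R) :
  is_derive f x df -> is_derive g x dg -> is_derive (fun y => f y + g y) x (df + dg).
Proof. exact (is_derive_plus f g x df dg). Qed.

Lemma is_derive_Rmult (f g : R -> R) (x df dg : R) :
  is_derive f x df -> is_derive g x dg ->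
  is_derive (fun y => f y * g y) x (df * g x + f x * dg).
Proof. intros Hf Hg; exact (is_derive_mult f g x df dg Hf Hg Rmult_comm). Qed.

Lemma is_derive_Rpow n (x : R) : is_derive (fun y => y ^ n) x (INR n * x ^ (n - 1)).
Proof.
  replace (INR n * x ^ (n - 1)) with (INR n * 1 * x ^ Nat.pred n)
    by (rewrite Nat.sub_1_r; ring).
  apply (is_derive_pow (fun y => y)), (is_derive_id (K := R_AbsRing)).
Qed.

Definition poly1_coef (f : R -> R) (d : nat) (a : nat -> R) : Prop :=
  (forall i, (d < i)%nat -> a i = 0) /\
  (forall x, f x = sum_f_R0 (fun i => a i * x ^ i) d).

Definition poly1_deg_le (f : R -> R) (d : nat) : Prop := exists a, poly1_coef f d a.

Definition poly1_deg (f : R -> R) (d : nat) : Prop :=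
  exists a, poly1_coef f d a /\ a d <> 0.

Lemma sum_f_R0_trailing_zeros (g : nat -> R) d k :
  (forall i, (d < i)%nat -> g i = 0) -> sum_f_R0 g (d + k) = sum_f_R0 g d.
Proof.
  intros H; induction k as [|k IHk]; [now rewrite Nat.add_0_r|].
  rewrite Nat.add_succ_r; simpl; rewrite IHk, H by lia; ring.
Qed.

Lemma poly1_coef_weaken f d d' a : (d <= d')%nat -> poly1_coef f d a -> poly1_coef f d' a.
Proof.
  intros Hd [Ha Hf]; split; [intros; apply Ha; lia|].
  intros x; replace d' with (d + (d' - d))%nat by lia.
  rewrite sum_f_R0_trailing_zeros; auto.
  intros i Hi; rewrite Ha by lia; ring.
Qed.

Lemma poly1_coef_ext f g d a : (forall x, f x = g x) -> poly1_coef f d a -> poly1_coef g d a.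
Proof. intros E [Ha Hf]; split; auto; intros; rewrite <- E; auto. Qed.

Lemma poly1_coef_plus f g d a b : poly1_coef f d a -> poly1_coef g d b ->
  poly1_coef (fun x => f x + g x) d (fun i => a i + b i).
Proof.
  intros [Ha Hf] [Hb Hg]; split; [intros; rewrite Ha, Hb by auto; ring|].
  intros x; rewrite Hf, Hg, <- sum_plus; apply sum_eq; intros; ring.
Qed.

Lemma poly1_coef_scal c f d a : poly1_coef f d a ->
  poly1_coef (fun x => c * f x) d (fun i => c * a i).
Proof.
  intros [Ha Hf]; split; [intros; rewrite Ha by auto; ring|].
  intros x; rewrite Hf, scal_sum; apply sum_eq; intros; ring.
Qed.

Lemma poly1_coef_mulx f d a : poly1_coef f d a ->
  poly1_coef (fun x => x * f x) (S d) (fun i => match i with O => 0 | S j => a j end).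
Proof.
  intros [Ha Hf]; split; [intros [|i] Hi; [lia|apply Ha; lia]|].
  intros x; rewrite (decomp_sum _ (S d)) by lia; simpl pred.
  rewrite Hf, scal_sum; simpl; rewrite Rmult_0_l, Rplus_0_l.
  apply sum_eq; intros; simpl; ring.
Qed.

Lemma poly1_coef_const c :
  poly1_coef (fun _ => c) 0 (fun i => match i with O => c | S _ => 0 end).
Proof. split; [intros [|i] Hi; [lia|auto]|intros; simpl; ring]. Qed.

Lemma poly_fun_of_deg_le f d : poly1_deg_le f d -> poly_fun f.
Proof.
  intros [a [_ Hf]]; apply (poly_fun_ext (fun x => sum_f_R0 (fun i => a i * x ^ i) d)).
  - apply poly_fun_coef.
  - intros; symmetry; auto.
Qed.

Lemma poly1_deg_le_weaken f d d' : (d <= d')%nat -> poly1_deg_le f d -> poly1_deg_le f d'.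
Proof. intros Hd [a Ha]; exists a; eapply poly1_coef_weaken; eauto. Qed.

Lemma poly1_deg_le_plus f g d :
  poly1_deg_le f d -> poly1_deg_le g d -> poly1_deg_le (fun x => f x + g x) d.
Proof. intros [a Ha] [b Hb]; eexists; apply poly1_coef_plus; eauto. Qed.

Lemma poly1_deg_le_scal c f d : poly1_deg_le f d -> poly1_deg_le (fun x => c * f x) d.
Proof. intros [a Ha]; eexists; apply poly1_coef_scal; eauto. Qed.

Lemma poly1_deg_le_const c : poly1_deg_le (fun _ => c) 0.
Proof. eexists; apply poly1_coef_const. Qed.

Lemma poly1_deg_le_of_deg f d : poly1_deg f d -> poly1_deg_le f d.
Proof. intros [a [Ha _]]; exists a; auto. Qed.

Lemma poly1_deg_ext f g d : (forall x, f x = g x) -> poly1_deg f d -> poly1_deg g d.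
Proof. intros E [a [Ha Hd]]; exists a; split; auto; eapply poly1_coef_ext; eauto. Qed.

Lemma poly1_deg_const c : c <> 0 -> poly1_deg (fun _ => c) 0.
Proof. intros Hc; eexists; split; [apply poly1_coef_const|auto]. Qed.

Lemma poly1_deg_scal c f d : c <> 0 -> poly1_deg f d -> poly1_deg (fun x => c * f x) d.
Proof.
  intros Hc [a [Ha Hd]]; eexists; split; [apply poly1_coef_scal; eauto|].
  now apply Rmult_integral_contrapositive.
Qed.

Lemma poly1_deg_mulx f d : poly1_deg f d -> poly1_deg (fun x => x * f x) (S d).
Proof. intros [a [Ha Hd]]; eexists; split; [apply poly1_coef_mulx; eauto|auto]. Qed.

Lemma poly1_deg_plus_lower f g d d' : (d' < d)%nat ->
  poly1_deg f d -> poly1_deg_le g d' -> poly1_deg (fun x => f x + g x) d.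
Proof.
  intros Hlt [a [Ha Hd]] [b Hb].
  eexists; split; [apply poly1_coef_plus; [eauto|eapply poly1_coef_weaken; [|eauto]; lia]|].
  destruct Hb as [Hb _]; rewrite Hb by lia; now rewrite Rplus_0_r.
Qed.

Lemma hermite_pair_eq n x : hermite_pair n x = (hermite n x, hermite (S n) x).
Proof.
  induction n as [|n IHn]; [reflexivity|].
  unfold hermite at 2; simpl hermite_pair at 2; rewrite IHn; simpl.
  unfold hermite at 1; simpl; now rewrite IHn.
Qed.

Lemma hermite_0 x : hermite 0 x = 1.
Proof. reflexivity. Qed.

(* Uniform in [n]: for [n = 0] the last term is [0 * H_0]. *)
Lemma hermite_succ n x :
  hermite (S n) x = 2 * x * hermite n x - 2 * INR n * hermite (n - 1) x.
Proof.
  destruct n as [|n]; [unfold hermite; simpl; ring|].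
  unfold hermite at 1; simpl hermite_pair; rewrite hermite_pair_eq; simpl.
  now rewrite Nat.sub_0_r.
Qed.

Lemma hermite_succ_succ n x :
  hermite (S (S n)) x = 2 * x * hermite (S n) x - 2 * INR (S n) * hermite n x.
Proof. now rewrite hermite_succ, Nat.sub_succ, Nat.sub_0_r. Qed.

Lemma is_derive_hermite n (x : R) : is_derive (hermite n) x (2 * INR n * hermite (n - 1) x).
Proof.
  revert x; induction n as [| |n IH0 IH1] using nat_ind2; intros x.
  - apply (is_derive_Rext (fun _ => 1)); [reflexivity|].
    replace (2 * INR 0 * hermite (0 - 1) x) with 0 by (simpl; ring).
    apply (is_derive_const (K := R_AbsRing) (V := R_NormedModule)).
  - apply (is_derive_Rext (fun y => 2 * y)); [intros; rewrite hermite_succ, hermite_0; simpl; ring|].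
    replace (2 * INR 1 * hermite (1 - 1) x) with (2 * 1) by (simpl; rewrite hermite_0; ring).
    apply is_derive_scal, (is_derive_id (K := R_AbsRing)).
  - apply (is_derive_Rext (fun y => (2 * y) * hermite (S n) y + (- 2 * INR (S n)) * hermite n y));
      [intros; rewrite hermite_succ_succ; ring|].
    replace (2 * INR (S (S n)) * hermite (S (S n) - 1) x)
      with ((2 * 1) * hermite (S n) x + 2 * x * (2 * INR (S n) * hermite (S n - 1) x)
            + (- 2 * INR (S n)) * (2 * INR n * hermite (n - 1) x))
      by (rewrite !Nat.sub_succ, !Nat.sub_0_r, (hermite_succ n), !S_INR; ring).
    apply is_derive_Rplus; [apply is_derive_Rmult; auto|apply is_derive_scal; auto].
    apply is_derive_scal, (is_derive_id (K := R_AbsRing)).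
Qed.

Lemma poly1_deg_hermite n : poly1_deg (hermite n) n.
Proof.
  induction n as [| |n IH0 IH1] using nat_ind2.
  - apply (poly1_deg_ext (fun _ => 1)); [reflexivity|apply poly1_deg_const; lra].
  - apply (poly1_deg_ext (fun x => x * 2)); [intros; unfold hermite; simpl; ring|].
    apply poly1_deg_mulx, poly1_deg_const; lra.
  - apply (poly1_deg_ext (fun x => x * (2 * hermite (S n) x) + (- 2 * INR (S n)) * hermite n x));
      [intros; rewrite hermite_succ_succ; ring|].
    apply (poly1_deg_plus_lower _ _ _ n); [lia| |].
    + apply poly1_deg_mulx, poly1_deg_scal; auto; lra.
    + apply poly1_deg_le_scal, poly1_deg_le_of_deg; auto.
Qed.

Lemma poly_fun_hermite n : poly_fun (hermite n).
Proof. exact (poly_fun_of_deg_le _ _ (poly1_deg_le_of_deg _ _ (poly1_deg_hermite n))). Qed.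

(* Integration by parts against [x^k]:
   [(x^k H_m e^{-x^2})' = (k x^{k-1} H_m - x^k H_{m+1}) e^{-x^2}]. *)
Lemma is_RInt_line_hermite_parts k m :
  is_RInt_line (fun x => (x ^ k * hermite (S m) x - INR k * x ^ (k - 1) * hermite m x)
                         * exp (- x ^ 2)) 0.
Proof.
  apply (is_RInt_line_ext
    (fun x => (- (INR k * x ^ (k - 1) * hermite m x + x ^ k * (2 * INR m * hermite (m - 1) x))
               - 2 * x * (- (x ^ k * hermite m x))) * exp (- x ^ 2)));
    [intros; rewrite (hermite_succ m); ring|].
  apply is_RInt_line_gauss_deriv.
  - apply (poly_fun_ext (fun x => (-1) * (x ^ k * hermite m x))); [|intros; ring].
    apply poly_fun_scal, (poly_fun_mult (fun x => x ^ k)); auto using poly_fun_pow, poly_fun_hermite.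
  - apply (poly_fun_ext (fun x => (-1) * ((INR k * x ^ (k - 1)) * hermite m x
                                         + x ^ k * (2 * INR m * hermite (m - 1) x))));
      [|intros; ring].
    apply poly_fun_scal, (poly_fun_plus (fun x => (INR k * x ^ (k - 1)) * hermite m x)).
    + apply (poly_fun_mult (fun x => INR k * x ^ (k - 1))); auto using poly_fun_scal, poly_fun_pow, poly_fun_hermite.
    + apply (poly_fun_mult (fun x => x ^ k)); auto using poly_fun_scal, poly_fun_pow, poly_fun_hermite.
  - intros x; apply (is_derive_Rext (fun y => (-1) * (y ^ k * hermite m y))); [intros; ring|].
    replace (- (INR k * x ^ (k - 1) * hermite m x + x ^ k * (2 * INR m * hermite (m - 1) x)))
      with ((-1) * (INR k * x ^ (k - 1) * hermite m x + x ^ k * (2 * INR m * hermite (m - 1) x)))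
      by ring.
    apply is_derive_scal, is_derive_Rmult; [apply is_derive_Rpow|apply is_derive_hermite].
Qed.

Lemma is_RInt_line_hermite_moment k m : (k < m)%nat ->
  is_RInt_line (fun x => x ^ k * (hermite m x * exp (- x ^ 2))) 0.
Proof.
  revert m; induction k as [|k IH]; intros m Hkm; destruct m as [|m]; try lia.
  - eapply is_RInt_line_ext; [|apply (is_RInt_line_hermite_parts 0 m)].
    intros x; simpl; ring.
  - apply (is_RInt_line_eq _ (0 + INR (S k) * 0)); [ring|].
    apply (is_RInt_line_ext
      (fun x => (x ^ S k * hermite (S m) x - INR (S k) * x ^ (S k - 1) * hermite m x) * exp (- x ^ 2)
                + INR (S k) * (x ^ k * (hermite m x * exp (- x ^ 2)))));
      [intros; simpl; rewrite Nat.sub_0_r; ring|].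
    apply is_RInt_line_plus; [apply is_RInt_line_hermite_parts|].
    apply is_RInt_line_scal, IH; lia.
Qed.

Lemma laguerre_pair_eq a n t : laguerre_pair a n t = (laguerre a n t, laguerre a (S n) t).
Proof.
  induction n as [|n IHn]; [reflexivity|].
  unfold laguerre at 2; simpl laguerre_pair at 2; rewrite IHn; simpl.
  unfold laguerre at 1; simpl; now rewrite IHn.
Qed.

Lemma laguerre_0 a t : laguerre a 0 t = 1.
Proof. reflexivity. Qed.

Lemma laguerre_1 a t : laguerre a 1 t = 1 + a - t.
Proof. reflexivity. Qed.

Lemma laguerre_succ_succ a k t : laguerre a (S (S k)) t =
  ((2 * INR (S k) + 1 + a - t) * laguerre a (S k) t - (INR (S k) + a) * laguerre a k t)
  / INR (S (S k)).
Proof. unfold laguerre at 1; simpl laguerre_pair; now rewrite laguerre_pair_eq. Qed.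

Lemma hermite_succ4 k x : hermite (S (S (S (S k)))) x =
  (4 * x ^ 2 - 2 * (2 * INR (S (S k)) + 1)) * hermite (S (S k)) x
  - 4 * INR (S (S k)) * INR (S k) * hermite k x.
Proof.
  rewrite (hermite_succ_succ (S (S k))), (hermite_succ_succ (S k)), (hermite_succ_succ k), !S_INR.
  ring.
Qed.

Definition laguerre_hermite_factor (n : nat) : R := / (2 * (-4) ^ n * INR (Factorial.fact n)).

Lemma laguerre_half_odd_hermite n x :
  x * laguerre (1 / 2) n (x ^ 2) = laguerre_hermite_factor n * hermite (S (2 * n)) x.
Proof.
  revert x; induction n as [| |n IH0 IH1] using nat_ind2; intros x;
    unfold laguerre_hermite_factor.
  - rewrite laguerre_0; unfold hermite; simpl; field.
  - rewrite laguerre_1; unfold hermite; simpl; field.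
  - rewrite laguerre_succ_succ.
    assert (Hn : INR (S (S n)) <> 0) by (apply not_0_INR; lia).
    replace (x * (((2 * INR (S n) + 1 + 1 / 2 - x ^ 2) * laguerre (1 / 2) (S n) (x ^ 2)
                  - (INR (S n) + 1 / 2) * laguerre (1 / 2) n (x ^ 2)) / INR (S (S n))))
      with (((2 * INR (S n) + 1 + 1 / 2 - x ^ 2) * (x * laguerre (1 / 2) (S n) (x ^ 2))
             - (INR (S n) + 1 / 2) * (x * laguerre (1 / 2) n (x ^ 2))) / INR (S (S n)))
      by (field; auto).
    rewrite IH0, IH1; unfold laguerre_hermite_factor.
    replace (2 * S (S n))%nat with (S (S (S (S (2 * n))))) by lia.
    replace (2 * S n)%nat with (S (S (2 * n))) by lia.
    rewrite (hermite_succ4 (S (2 * n))), !fact_simpl, !mult_INR.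
    replace (INR (S (S (S (2 * n))))) with (2 * INR n + 3) by (rewrite !S_INR, mult_INR; simpl; ring).
    replace (INR (S (S (2 * n)))) with (2 * INR n + 2) by (rewrite !S_INR, mult_INR; simpl; ring).
    rewrite !S_INR; simpl pow.
    pose proof (INR_fact_neq_0 n); pose proof (pos_INR n).
    field; repeat split; try lra; apply pow_nonzero; lra.
Qed.

Lemma laguerre_contiguous a k t : t * laguerre (a + 1) k t =
  (INR k + 1 + a) * laguerre a k t - INR (S k) * laguerre a (S k) t.
Proof.
  induction k as [| |k IH0 IH1] using nat_ind2.
  - rewrite !laguerre_0, laguerre_1; simpl; ring.
  - rewrite !laguerre_1, laguerre_succ_succ, laguerre_1, laguerre_0; simpl; field.
  - assert (Hk : INR (S (S k)) <> 0) by (apply not_0_INR; lia).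
    rewrite (laguerre_succ_succ (a + 1)).
    replace (t * (((2 * INR (S k) + 1 + (a + 1) - t) * laguerre (a + 1) (S k) t
                  - (INR (S k) + (a + 1)) * laguerre (a + 1) k t) / INR (S (S k))))
      with (((2 * INR (S k) + 1 + (a + 1) - t) * (t * laguerre (a + 1) (S k) t)
             - (INR (S k) + (a + 1)) * (t * laguerre (a + 1) k t)) / INR (S (S k)))
      by (field; auto).
    rewrite IH0, IH1, (laguerre_succ_succ a (S k)), (laguerre_succ_succ a k), !S_INR.
    pose proof (pos_INR k); field; lra.
Qed.

Lemma poly1_deg_laguerre_sq a n : poly1_deg (fun x => laguerre a n (x ^ 2)) (2 * n).
Proof.
  induction n as [| |n IH0 IH1] using nat_ind2.
  - apply (poly1_deg_ext (fun _ => 1)); [reflexivity|apply poly1_deg_const; lra].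
  - apply (poly1_deg_ext (fun x => x * (x * (-1)) + (1 + a)));
      [intros; rewrite laguerre_1; simpl; ring|].
    apply (poly1_deg_plus_lower _ _ _ 0); [lia| |apply poly1_deg_le_const].
    apply poly1_deg_mulx, poly1_deg_mulx, poly1_deg_const; lra.
  - assert (Hn : INR (S (S n)) <> 0) by (apply not_0_INR; lia).
    replace (2 * S (S n))%nat with (S (S (2 * S n))) by lia.
    apply (poly1_deg_ext
      (fun x => x * (x * ((-1 / INR (S (S n))) * laguerre a (S n) (x ^ 2)))
                + (((2 * INR (S n) + 1 + a) / INR (S (S n))) * laguerre a (S n) (x ^ 2)
                   + (- (INR (S n) + a) / INR (S (S n))) * laguerre a n (x ^ 2))));
      [intros; rewrite laguerre_succ_succ; simpl; field; auto|].
    apply (poly1_deg_plus_lower _ _ _ (2 * S n)); [lia| |].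
    + apply poly1_deg_mulx, poly1_deg_mulx, poly1_deg_scal; auto.
      unfold Rdiv; apply Rmult_integral_contrapositive; split; [lra|apply Rinv_neq_0_compat; auto].
    + apply poly1_deg_le_plus; apply poly1_deg_le_scal.
      * apply poly1_deg_le_of_deg; auto.
      * apply (poly1_deg_le_weaken _ (2 * n)); [lia|apply poly1_deg_le_of_deg; auto].
Qed.

Lemma sum_f_R0_at0 (g : nat -> R) N :
  (forall j, (0 < j)%nat -> g j = 0) -> sum_f_R0 g N = g 0%nat.
Proof. intros H; induction N as [|N IHN]; simpl; auto; rewrite IHN, (H (S N)) by lia; ring. Qed.

Lemma sum_f_R0_plus_at0 (g : nat -> R) K N :
  sum_f_R0 (fun i => g i + match i with O => K | S _ => 0 end) N = sum_f_R0 g N + K.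
Proof. induction N as [|N IHN]; simpl; auto; rewrite IHN; ring. Qed.

(* [b 0] is ignored: the constant term is [a 0]. *)
Definition axes_coef (a b : nat -> R) (i j : nat) : R :=
  match i, j with
  | _, O => a i
  | O, S _ => b j
  | S _, S _ => 0
  end.

Lemma poly2_eval_axes_coef a b N x y :
  poly2_eval (axes_coef a b) N x y =
  sum_f_R0 (fun i => a i * x ^ i) N + (sum_f_R0 (fun j => b j * y ^ j) N - b 0%nat).
Proof.
  unfold poly2_eval; rewrite <- sum_f_R0_plus_at0; apply sum_eq; intros [|i] _.
  - rewrite (sum_eq _ (fun j => b j * y ^ j + match j with O => a 0%nat - b 0%nat | S _ => 0 end)).
    + rewrite sum_f_R0_plus_at0; simpl; ring.
    + intros [|j] _; simpl; ring.
  - rewrite sum_f_R0_at0; [simpl; ring|].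
    intros [|j] Hj; [lia|simpl; ring].
Qed.

Lemma poly2_deg_axes f d s (Y : R -> R -> R) : (1 <= d)%nat -> poly1_deg f d ->
  (forall x y, Y x y = f x + s * (f y - f 0)) -> poly2_deg Y d.
Proof.
  intros Hd [a [[Ha Hf] Had]] HY.
  exists (axes_coef a (fun j => s * a j)); split; [|split].
  - intros [|i] [|j] Hij; simpl; rewrite ?Ha by lia; ring.
  - exists d, 0%nat; split; [lia|destruct d; [lia|exact Had]].
  - intros x y; rewrite poly2_eval_axes_coef, HY, !Hf.
    rewrite (sum_f_R0_at0 (fun i => a i * 0 ^ i)) by (intros; rewrite pow_i by lia; ring).
    rewrite (sum_eq (fun j => s * a j * y ^ j) (fun i => a i * y ^ i * s)), <- scal_sum
      by (intros; ring).
    simpl; ring.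
Qed.

Lemma poly2_deg_le_axes g N : poly2_deg_le g N ->
  exists cx cy : nat -> R, cx 0%nat = cy 0%nat /\
    (forall x, g x 0 = sum_f_R0 (fun i => cx i * x ^ i) N) /\
    (forall y, g 0 y = sum_f_R0 (fun j => cy j * y ^ j) N).
Proof.
  intros [c [_ Hc]]; exists (fun i => c i 0%nat), (fun j => c 0%nat j).
  split; [reflexivity|split]; intros z; rewrite Hc; unfold poly2_eval.
  - apply sum_eq; intros i _; rewrite sum_f_R0_at0; [simpl; ring|].
    intros j Hj; rewrite pow_i by lia; ring.
  - rewrite sum_f_R0_at0; [apply sum_eq; intros; simpl; ring|].
    intros i Hi; rewrite (sum_eq _ (fun _ => 0)) by (intros; rewrite pow_i by lia; ring).
    clear; induction N as [|N IHN]; simpl; rewrite ?IHN; ring.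
Qed.

(* The constant term of [g] is shared by both axes; it contributes [c0 L + s c0 L], which
   vanishes when [s = -1] or [L = 0]. *)
Lemma axes_orth_of_moments (Y g : R -> R -> R) N phi s L :
  (forall x, Y x 0 = phi x) -> (forall y, Y 0 y = s * phi y) ->
  is_RInt_line (fun x => phi x * exp (- x ^ 2)) L ->
  (forall i, (1 <= i <= N)%nat -> is_RInt_line (fun x => x ^ i * (phi x * exp (- x ^ 2))) 0) ->
  s = -1 \/ L = 0 -> poly2_deg_le g N -> axes_orth Y g.
Proof.
  intros HX HY HL Hmom Hs Hg.
  destruct (poly2_deg_le_axes g N Hg) as [cx [cy [E0 [Ex Ey]]]].
  exists (cx 0%nat * L), (s * (cy 0%nat * L)); split; [|split].
  - apply improper_integral_R_of_line.
    eapply is_RInt_line_ext; [|apply (is_RInt_line_poly_sum _ L cx N HL Hmom)].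
    intros x; rewrite HX, Ex; ring.
  - apply improper_integral_R_of_line.
    eapply is_RInt_line_ext; [|apply is_RInt_line_scal, (is_RInt_line_poly_sum _ L cy N HL Hmom)].
    intros y; rewrite HY, Ey; ring.
  - rewrite E0; destruct Hs as [-> | ->]; ring.
Qed.

Lemma axes_orth_sym_antisym (Y Z : R -> R -> R) phi psi :
  poly_fun phi -> poly_fun psi ->
  (forall x, Y x 0 = phi x) -> (forall y, Y 0 y = phi y) ->
  (forall x, Z x 0 = psi x) -> (forall y, Z 0 y = - psi y) -> axes_orth Y Z.
Proof.
  intros Hphi Hpsi HYx HYy HZx HZy.
  destruct (ex_is_RInt_line_poly_gauss (fun x => phi x * psi x)) as [l Hl];
    [now apply poly_fun_mult|].
  exists l, ((-1) * l); split; [|split; [|ring]]; apply improper_integral_R_of_line.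
  - eapply is_RInt_line_ext; [|exact Hl]; intros; rewrite HYx, HZx; ring.
  - eapply is_RInt_line_ext; [|apply is_RInt_line_scal, Hl]; intros; rewrite HYy, HZy; ring.
Qed.

Lemma laguerre_three_halves_hermite q x :
  x * (x ^ 2 * laguerre (3 / 2) q (x ^ 2)) =
  (INR q + 3 / 2) * laguerre_hermite_factor q * hermite (S (2 * q)) x
  - INR (S q) * laguerre_hermite_factor (S q) * hermite (S (2 * S q)) x.
Proof.
  replace (3 / 2) with (1 / 2 + 1) by field.
  rewrite laguerre_contiguous.
  replace (x * ((INR q + 1 + 1 / 2) * laguerre (1 / 2) q (x ^ 2)
               - INR (S q) * laguerre (1 / 2) (S q) (x ^ 2)))
    with ((INR q + 1 + 1 / 2) * (x * laguerre (1 / 2) q (x ^ 2))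
          - INR (S q) * (x * laguerre (1 / 2) (S q) (x ^ 2))) by ring.
  rewrite !laguerre_half_odd_hermite; ring.
Qed.

Lemma Y2_odd p x y :
  Y2 (S (2 * p)) x y = x * laguerre (1 / 2) p (x ^ 2) - y * laguerre (1 / 2) p (y ^ 2).
Proof.
  unfold Y2; rewrite (Nat.even_add_mul_2 1 p : Nat.even (S (2 * p)) = false), Nat.div2_succ_double; reflexivity.
Qed.

Lemma Y2_even q x y :
  Y2 (2 * S q) x y = x ^ 2 * laguerre (3 / 2) q (x ^ 2) - y ^ 2 * laguerre (3 / 2) q (y ^ 2).
Proof.
  unfold Y2; rewrite (Nat.even_add_mul_2 0 (S q) : Nat.even (2 * S q) = true), Nat.div2_double.
  now replace (S q - 1)%nat with q by lia.
Qed.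

Lemma Y2_axis_profile m : (1 <= m)%nat ->
  exists phi, poly1_deg phi m /\ phi 0 = 0 /\ (forall x y, Y2 m x y = phi x - phi y) /\
    forall i, (1 <= i <= m - 1)%nat ->
      is_RInt_line (fun x => x ^ i * (phi x * exp (- x ^ 2))) 0.
Proof.
  intros Hm; destruct (Nat.Even_or_Odd m) as [[[|q] ->]|[p ->]]; [lia| |].
  - exists (fun x => x ^ 2 * laguerre (3 / 2) q (x ^ 2)); split; [|split; [|split]].
    + replace (2 * S q)%nat with (S (S (2 * q))) by lia.
      apply (poly1_deg_ext (fun x => x * (x * laguerre (3 / 2) q (x ^ 2)))); [intros; ring|].
      apply poly1_deg_mulx, poly1_deg_mulx, poly1_deg_laguerre_sq.
    + ring.
    + apply Y2_even.
    + intros [|j] Hj; [lia|].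
      set (A := (INR q + 3 / 2) * laguerre_hermite_factor q).
      set (B := - INR (S q) * laguerre_hermite_factor (S q)).
      apply (is_RInt_line_eq _ (A * 0 + B * 0)); [ring|].
      apply (is_RInt_line_ext
        (fun x => A * (x ^ j * (hermite (S (2 * q)) x * exp (- x ^ 2)))
                  + B * (x ^ j * (hermite (S (2 * S q)) x * exp (- x ^ 2)))));
        [|apply is_RInt_line_plus; apply is_RInt_line_scal, is_RInt_line_hermite_moment; lia].
      intros x.
      replace (x ^ S j * (x ^ 2 * laguerre (3 / 2) q (x ^ 2) * exp (- x ^ 2)))
        with (x ^ j * (x * (x ^ 2 * laguerre (3 / 2) q (x ^ 2))) * exp (- x ^ 2)) by (simpl; ring).
      rewrite laguerre_three_halves_hermite; unfold A, B; ring.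
  - replace (2 * p + 1)%nat with (S (2 * p)) by lia.
    exists (fun x => x * laguerre (1 / 2) p (x ^ 2)); split; [|split; [|split]].
    + apply poly1_deg_mulx, poly1_deg_laguerre_sq.
    + ring.
    + apply Y2_odd.
    + intros i Hi.
      apply (is_RInt_line_eq _ (laguerre_hermite_factor p * 0)); [ring|].
      apply (is_RInt_line_ext
        (fun x => laguerre_hermite_factor p * (x ^ i * (hermite (S (2 * p)) x * exp (- x ^ 2)))));
        [intros; rewrite laguerre_half_odd_hermite; ring|].
      apply is_RInt_line_scal, is_RInt_line_hermite_moment; lia.
Qed.

Theorem proposition6p3 (m : nat) (hm : (1 <= m)%nat) :
  poly2_deg (Y1 m) m /\ poly2_deg (Y2 m) m /\
  (forall g : R -> R -> R, poly2_deg_le g (m - 1) ->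
     axes_orth (Y1 m) g /\ axes_orth (Y2 m) g) /\
  axes_orth (Y1 m) (Y2 m).
Proof.
  destruct (Y2_axis_profile m hm) as [phi [Hdeg [Hphi0 [HY2 Hmom]]]].
  assert (Hphi : poly_fun phi) by exact (poly_fun_of_deg_le _ _ (poly1_deg_le_of_deg _ _ Hdeg)).
  assert (HY2x : forall x, Y2 m x 0 = phi x) by (intros; rewrite HY2, Hphi0; ring).
  assert (HY2y : forall y, Y2 m 0 y = -1 * phi y) by (intros; rewrite HY2, Hphi0; ring).
  assert (HY1x : forall x, Y1 m x 0 = hermite m x) by (intros; unfold Y1; ring).
  assert (HY1y : forall y, Y1 m 0 y = 1 * hermite m y) by (intros; unfold Y1; ring).
  split; [|split; [|split]].
  - apply (poly2_deg_axes (hermite m) m 1); auto using poly1_deg_hermite.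
    intros; unfold Y1; ring.
  - apply (poly2_deg_axes phi m (-1)); auto.
    intros; rewrite HY2, Hphi0; ring.
  - intros g Hg; split.
    + apply (axes_orth_of_moments _ g (m - 1) (hermite m) 1 0); auto.
      * eapply is_RInt_line_ext; [|apply (is_RInt_line_hermite_moment 0 m); lia].
        intros; simpl; ring.
      * intros i Hi; apply is_RInt_line_hermite_moment; lia.
    + destruct (ex_is_RInt_line_poly_gauss phi Hphi) as [L HL].
      apply (axes_orth_of_moments _ g (m - 1) phi (-1) L); auto.
  - apply (axes_orth_sym_antisym _ _ (hermite m) phi); auto using poly_fun_hermite.
    + intros; unfold Y1; ring.
    + intros; rewrite HY2y; ring.
Qed.
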